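(* Let $(U,d)$ be an asymmetric pseudometric space, $k\ge 2$, $O\subseteq U$ an optimal solution of AMMD with optimum $R^*=\operatorname{div}(O)>0$, and $R'=\min\{d(u,v): d(u,v)\ge R^*/3,\ u,v\in U,\ u\ne v\}$. Let $0<R\le R'$ and run the clustering procedure Cluster$(U,d,R)$, producing centers $c_1,c_2,\dots$ and sets $A_1,A_2,\dots$. Then (i) $|A_t\cap O|\le 1$ for all $t$; and (ii) for any $t\ne t'$ with $|A_t\cap O|=1$ and $|A_{t'}\cap O|=1$, we have $d_{\min}(c_t,c_{t'})\ge R'\ge R^*/3$.
   Context: An asymmetric pseudometric space $(U,d)$ is a finite set $U$ with $d:U\times U\to\mathbb{R}_{\ge 0}$ such that $d(u,u)=0$ and $d(u,v)\le d(u,w)+d(w,v)$ for all $u,v,w\in U$ ($d$ need not be symmetric). For $S\subseteq U$, $\operatorname{div}(S)=\min_{u,v\in S,\,u\ne v} d(u,v)$; AMMD asks for $O\subseteq U$, $|O|=k$, maximizing $\operatorname{div}(O)$. $d_{\min}(u,v)=\min\{d(u,v),d(v,u)\}$, $d_{\max}(u,v)=\max\{d(u,v),d(v,u)\}$. Cluster$(U,d,R)$: initially all points are unmarked and $t=1$; while an unmarked point exists, choose any unmarked point $c_t$, let $A_t=\{v\in U \text{ unmarked}: d_{\max}(c_t,v)<R\}$, mark all points of $A_t$, add $c_t$ to the output set $U'$, and increment $t$. It returns $U'=\{c_1,c_2,\dots\}$. *)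

From mathcomp Require Import all_boot all_order all_algebra.
Set Implicit Arguments. Unset Strict Implicit. Unset Printing Implicit Defensive.
Import Order.TTheory GRing.Theory Num.Theory.
Local Open Scope ring_scope.

Section AMMD.
Variables (R : realFieldType) (T : finType) (d : T -> T -> R).

Definition asym_pseudometric : Prop :=
  [/\ forall u, d u u = 0,
      forall u v, 0 <= d u v &
      forall u v w, d u v <= d u w + d w v].

Definition dmin (u v : T) : R := Num.min (d u v) (d v u).
Definition dmax (u v : T) : R := Num.max (d u v) (d v u).

(* an upper bound on all distances; used only as the neutral element of the
   finite minima below (it plays the role of +oo: every minimum taken over a
   non-empty index set is unaffected by it) *)
Definition dtop : R := \big[Num.max/0]_(p : T * T) d p.1 p.2.

(* div(S) = min_{u,v in S, u <> v} d(u,v)  (meaningful for #|S| >= 2) *)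
Definition div (S : {set T}) : R :=
  \big[Num.min/dtop]_(p : T * T | (p.1 \in S) && (p.2 \in S) && (p.1 != p.2))
     d p.1 p.2.

Definition Rprime (Rstar : R) : R :=
  \big[Num.min/dtop]_(p : T * T | (p.1 != p.2) && (Rstar / 3%:R <= d p.1 p.2))
     d p.1 p.2.

(* Cluster(U,d,Rad): M is the set of marked points. *)
Definition clusterA (Rad : R) (M : {set T}) (c : T) : {set T} :=
  [set v | (v \notin M) && (dmax c v < Rad)].

Definition cluster_step (Rad : R) (M : {set T}) (c : T) : {set T} :=
  M :|: clusterA Rad M c.

(* cs = [:: c_1; c_2; ...] is a possible sequence of chosen centers of a
   complete run of Cluster(U,d,Rad) starting from marked set M *)
Fixpoint cluster_run_from (Rad : R) (M : {set T}) (cs : seq T) : bool :=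
  match cs with
  | [::] => M == setT
  | c :: cs' => (c \notin M) && cluster_run_from Rad (cluster_step Rad M c) cs'
  end.

Definition cluster_run (Rad : R) (cs : seq T) : bool :=
  cluster_run_from Rad set0 cs.

(* marked set before step t (0-indexed), and the set A_t of step t *)
Definition marked_before (Rad : R) (cs : seq T) (t : nat) : {set T} :=
  foldl (cluster_step Rad) set0 (take t cs).

Definition clusterAt (Rad : R) (cs : seq T) (x0 : T) (t : nat) : {set T} :=
  clusterA Rad (marked_before Rad cs t) (nth x0 cs t).

End AMMD.

(** Every cluster [A_t] lies within distance [R*/3] of its center in both
    directions, because a distance below [R'] is automatically below [R*/3].
    Two optimal points at distance at least [R*] therefore cannot share a
    cluster, and if they lie in different clusters, going from one to the
    other through the two centers shows that the centers are at least [R*/3],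
    hence at least [R'], apart in both directions. *)

From mathcomp Require Import all_boot all_order all_algebra.
From mathcomp Require Import lra.
Import Order.TTheory GRing.Theory Num.Theory.
Local Open Scope ring_scope.

Section Clustering.
Local Set Implicit Arguments.
Local Unset Strict Implicit.

Variables (R : realFieldType) (T : finType) (d : T -> T -> R).
Hypothesis d0 : forall u, d u u = 0.
Hypothesis dtri : forall u v w, d u v <= d u w + d w v.

Lemma div_le_dist (S : {set T}) u v :
  u \in S -> v \in S -> u != v -> div d S <= d u v.
Proof.
move=> uS vS neq_uv.
by apply: (bigmin_le_cond _ (j := (u, v))); rewrite /= uS vS.
Qed.

Lemma div_le_dtop (S : {set T}) : div d S <= dtop d.
Proof. exact: bigmin_le_id. Qed.

Lemma third_le_Rprime Rs : Rs / 3%:R <= dtop d -> Rs / 3%:R <= Rprime d Rs.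
Proof. by move=> le_dtop; apply: le_bigmin => // p /andP[]. Qed.

Lemma Rprime_le_dist Rs u v :
  0 < Rs -> Rs / 3%:R <= d u v -> Rprime d Rs <= d u v.
Proof.
move=> Rs_gt0 far_uv; have [eq_uv|neq_uv] := eqVneq u v.
  by rewrite eq_uv d0 in far_uv; lra.
by apply: (bigmin_le_cond _ (j := (u, v))); rewrite /= neq_uv.
Qed.

Lemma dmax_lt_third Rs u v :
  0 < Rs -> dmax d u v < Rprime d Rs -> dmax d u v < Rs / 3%:R.
Proof.
move=> Rs_gt0; rewrite /dmax !gt_max => /andP[lt_uv lt_vu].
by apply/andP; split; rewrite ltNge; apply/negP => /(Rprime_le_dist Rs_gt0);
  rewrite leNgt ?lt_uv ?lt_vu.
Qed.

Lemma dist_le_via_centers c c' o o' :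
  d o o' <= dmax d c o + d c c' + dmax d c' o'.
Proof.
have le_oc : d o c <= dmax d c o by rewrite /dmax le_max lexx orbT.
have le_c'o' : d c' o' <= dmax d c' o' by rewrite /dmax le_max lexx.
have := dtri o o' c; have := dtri c o' c'; lra.
Qed.

Variables (Rad : R) (cs : seq T) (x0 : T).

Local Notation marked := (marked_before d Rad cs).
Local Notation A := (clusterAt d Rad cs x0).
Local Notation c t := (nth x0 cs t).

Lemma marked_before_subset_succ t : marked t \subset marked t.+1.
Proof.
rewrite /marked_before; have [lt_t_cs|le_cs_t] := ltnP t (size cs).
  by rewrite (take_nth x0 lt_t_cs) foldl_rcons subsetUl.
by rewrite !take_oversize // (leq_trans le_cs_t).
Qed.

Lemma marked_before_mono t t' : (t <= t')%N -> marked t \subset marked t'.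
Proof.
move/subnK <-; elim: (t' - t)%N => [|n IHn]; first exact: subxx.
exact: subset_trans IHn (marked_before_subset_succ _).
Qed.

Lemma clusterAt_sub_marked_succ t :
  (t < size cs)%N -> A t \subset marked t.+1.
Proof.
move=> lt_t_cs.
by rewrite /marked_before (take_nth x0 lt_t_cs) foldl_rcons subsetUr.
Qed.

Lemma clusterAt_disjoint t t' :
  (t < t')%N -> (t' < size cs)%N -> [disjoint A t & A t'].
Proof.
move=> lt_tt' lt_t'_cs; rewrite disjoint_subset; apply/subsetP => v vAt.
rewrite !inE negb_and negbK; apply/orP; left.
apply: (subsetP (marked_before_mono lt_tt')).
exact: subsetP (clusterAt_sub_marked_succ (ltn_trans lt_tt' lt_t'_cs)) v vAt.
Qed.

Variable O : {set T}.
Hypothesis div_gt0 : 0 < div d O.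
Hypothesis Rad_le : Rad <= Rprime d (div d O).

Lemma clusterAt_near t v : v \in A t -> dmax d (c t) v < div d O / 3%:R.
Proof.
rewrite inE => /andP[_ /lt_le_trans/(_ Rad_le)].
exact: dmax_lt_third div_gt0.
Qed.

Lemma card_clusterAt_optimal_le1 t : (#|A t :&: O| <= 1)%N.
Proof.
rewrite leqNgt; apply/negP => /card_gt1P[o [o' [+ + neq_oo']]].
rewrite !in_setI => /andP[/clusterAt_near near_o oO].
move=> /andP[/clusterAt_near near_o' o'O].
have := dist_le_via_centers (c t) (c t) o o'; rewrite d0.
have := div_le_dist oO o'O neq_oo'; have := div_gt0; lra.
Qed.

Lemma Rprime_le_dmin_centers t t' o o' :
  (t < t')%N -> (t' < size cs)%N -> o \in A t :&: O -> o' \in A t' :&: O ->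
  Rprime d (div d O) <= dmin d (c t) (c t').
Proof.
move=> lt_tt' lt_t'_cs; rewrite !in_setI => /andP[oA oO] /andP[o'A o'O].
have near_o := clusterAt_near oA; have near_o' := clusterAt_near o'A.
have neq_oo' : o != o'.
  apply: contraTneq o'A => <-.
  by rewrite (disjointFr (clusterAt_disjoint lt_tt' lt_t'_cs) oA).
rewrite /dmin le_min; apply/andP; split; apply: (Rprime_le_dist div_gt0).
  have := dist_le_via_centers (c t) (c t') o o'.
  have := div_le_dist oO o'O neq_oo'; lra.
have := dist_le_via_centers (c t') (c t) o' o.
have : div d O <= d o' o by apply: div_le_dist; rewrite // eq_sym.
lra.
Qed.

End Clustering.

Theorem proposition5p2 (R : realFieldType) (T : finType) (d : T -> T -> R)
  (hd : asym_pseudometric d)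
  (k : nat) (hk : (2 <= k)%N)
  (O : {set T}) (hOk : #|O| = k)
  (hOopt : forall S : {set T}, #|S| = k -> div d S <= div d O)
  (hpos : 0 < div d O)
  (Rad : R) (hR0 : 0 < Rad) (hRle : Rad <= Rprime d (div d O))
  (cs : seq T) (hrun : cluster_run d Rad cs) (x0 : T) :
  (forall t, (t < size cs)%N -> (#|clusterAt d Rad cs x0 t :&: O| <= 1)%N) /\
  (forall t t', (t < size cs)%N -> (t' < size cs)%N -> t != t' ->
     #|clusterAt d Rad cs x0 t :&: O| = 1%N ->
     #|clusterAt d Rad cs x0 t' :&: O| = 1%N ->
     Rprime d (div d O) <= dmin d (nth x0 cs t) (nth x0 cs t') /\
     div d O / 3%:R <= Rprime d (div d O)).
Proof.
case: hd => d0 _ dtri.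
split=> [t _|t t' lt_t_cs lt_t'_cs neq_tt'].
  exact: card_clusterAt_optimal_le1.
move=> /eqP/cards1P[o Eo] /eqP/cards1P[o' Eo'].
split; last first.
  by apply: third_le_Rprime; apply: le_trans (div_le_dtop d O); lra.
have oA : o \in clusterAt d Rad cs x0 t :&: O by rewrite Eo set11.
have o'A : o' \in clusterAt d Rad cs x0 t' :&: O by rewrite Eo' set11.
case: ltngtP neq_tt' => // [lt_tt'|lt_t't] _.
  exact: Rprime_le_dmin_centers oA o'A.
by rewrite /dmin minC; apply: Rprime_le_dmin_centers o'A oA.
Qed.
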